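(* Write $e^{\arctan z}=1+\sum_{n=1}^{\infty}a_nz^n$ for $|z|<1$, where $\arctan z=\sum_{k\ge0}\frac{(-1)^kz^{2k+1}}{2k+1}$. Equivalently, $(a_n)$ is the real sequence determined by $a_0=1$, $a_1=1$ and $a_n-(n+1)a_{n+1}-(n-1)a_{n-1}=0$ for $n\ge1$. Then $$\sum_{n=1}^{\infty}a_n^2=1+\frac{1}{2^2}+\frac{1}{6^2}+\frac{7^2}{24^2}+\frac{1}{24^2}+\cdots=\frac{e^{\pi/2}+e^{-\pi/2}}{2}-1.$$ *)

From Stdlib Require Import Reals.
From Coquelicot Require Import Coquelicot.
Open Scope R_scope.

(* ab n = (a_n, a_{n+1}), where a_0 = 1, a_1 = 1 and, for n >= 1,
   a_n - (n+1) a_{n+1} - (n-1) a_{n-1} = 0, i.e.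
   a_{m+2} = (a_{m+1} - m * a_m) / (m+2)   (taking n = m+1). *)
Fixpoint ab (n : nat) : R * R :=
  match n with
  | O => (1, 1)
  | S m => let (x, y) := ab m in (y, (y - INR m * x) / INR (m + 2))
  end.

Definition a (n : nat) : R := fst (ab n).

From Stdlib Require Import Reals Lra Lia.
From Coquelicot Require Import Coquelicot.
Open Scope R_scope.

(* Let f z = exp (atan z) = sum_n a_n z^n.  Since 2 Re atan (r e^(it)) = atan (wr r * cos t)
   with wr r = 2 r / (1 - r^2), we have |f (r e^(it))|^2 = exp (atan (wr r * cos t)).  We prove
   this without complex numbers: the real and imaginary parts U, V of f (r e^(it)), as power
   series in r, satisfy the real form of (1 + z^2) f' = f, which makes
   (U^2 + V^2) exp (- atan (wr r * cos t)) constant in r.  Parseval's identity then expresses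
   sum_n a_n^2 r^(2n) as the mean over t of exp (atan (wr r * cos t)).  As r -> 1 the integrand
   tends to exp (PI/2) where cos t > 0 and to exp (-PI/2) where cos t < 0, so the mean tends to
   cosh (PI/2); as the a_n^2 are nonnegative, this Abel limit is the sum of the series. *)

Lemma exp_le_mono x y : x <= y -> exp x <= exp y.
Proof. intros [H|H]; [apply Rlt_le, exp_increasing, H | rewrite H; apply Rle_refl]. Qed.

Lemma atan_le_mono x y : x <= y -> atan x <= atan y.
Proof. intros [H|H]; [apply Rlt_le, atan_increasing, H | rewrite H; apply Rle_refl]. Qed.

Lemma exp_le_1_add_2x x : 0 <= x <= 1 / 2 -> exp x <= 1 + 2 * x.
Proof.
  intros Hx; assert (H1 := exp_ineq1_le (- x)); assert (H2 := exp_pos x).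
  assert (H3 : exp x * exp (- x) = 1) by (rewrite <- exp_plus, Rplus_opp_r; apply exp_0).
  nra.
Qed.

Lemma pow_le1 r n : 0 <= r <= 1 -> r ^ n <= 1.
Proof. intros Hr; rewrite <- (pow1 n); apply pow_incr; exact Hr. Qed.

Lemma pow_le_pow_le1 r m n : 0 <= r <= 1 -> (m <= n)%nat -> r ^ n <= r ^ m.
Proof.
  intros Hr Hmn; replace n with (m + (n - m))%nat by lia; rewrite pow_add.
  rewrite <- (Rmult_1_r (r ^ m)) at 2.
  apply Rmult_le_compat_l; [apply pow_le; lra | apply pow_le1, Hr].
Qed.

Lemma pow_ge_1_sub r N : 0 <= r <= 1 -> 1 - INR N * (1 - r) <= r ^ N.
Proof.
  intros Hr; induction N as [|N IH]; [simpl; lra|].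
  rewrite S_INR; simpl.
  assert (0 <= r * (r ^ N - (1 - INR N * (1 - r)))) by (apply Rmult_le_pos; lra).
  assert (0 <= INR N * ((1 - r) * (1 - r))) by (apply Rmult_le_pos; [apply pos_INR | nra]).
  nra.
Qed.

Lemma abs_sq_sub_le x p e M : Rabs (x - p) <= e -> Rabs x <= M -> e <= M ->
  Rabs (x ^ 2 - p ^ 2) <= 3 * M * e.
Proof.
  intros Hxp Hx HeM.
  assert (Hsum : Rabs (x + p) <= 3 * M).
  { replace (x + p) with (2 * x - (x - p)) by ring.
    eapply Rle_trans; [apply Rabs_triang|]; rewrite Rabs_Ropp, Rabs_mult, Rabs_right; lra. }
  replace (x ^ 2 - p ^ 2) with ((x + p) * (x - p)) by ring; rewrite Rabs_mult.
  apply Rmult_le_compat; auto using Rabs_pos.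
Qed.

Lemma one_sub_sq_pos r : Rabs r < 1 -> 0 < 1 - r ^ 2.
Proof. intros Hr; apply Rabs_def2 in Hr; nra. Qed.

Lemma RInt_ge_const (f : R -> R) u v m : u <= v -> ex_RInt f u v ->
  (forall x, u < x < v -> m <= f x) -> (v - u) * m <= RInt f u v.
Proof.
  intros Huv Hf Hm.
  assert (H := RInt_le (fun _ => m) f u v Huv (ex_RInt_const _ _ _) Hf Hm).
  rewrite RInt_const in H; exact H.
Qed.

Lemma RInt_le_const (f : R -> R) u v m : u <= v -> ex_RInt f u v ->
  (forall x, u < x < v -> f x <= m) -> RInt f u v <= (v - u) * m.
Proof.
  intros Huv Hf Hm.
  assert (H := RInt_le f (fun _ => m) u v Huv Hf (ex_RInt_const _ _ _) Hm).
  rewrite RInt_const in H; exact H.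
Qed.

Lemma sin_INR_mult_2PI j : sin (INR j * (2 * PI)) = 0.
Proof.
  induction j as [|j IH]; [simpl; rewrite Rmult_0_l; apply sin_0|].
  rewrite S_INR, Rmult_plus_distr_r, Rmult_1_l, sin_plus, IH, sin_2PI; ring.
Qed.

Lemma is_RInt_cos_INR_mult j : (1 <= j)%nat -> is_RInt (fun t => cos (INR j * t)) 0 (2 * PI) 0.
Proof.
  intros Hj; assert (HJ : 0 < INR j) by (apply lt_0_INR; lia).
  assert (HI := is_RInt_derive (fun t => sin (INR j * t) / INR j) (fun t => cos (INR j * t)) 0 (2 * PI)).
  cbv beta in HI; change (minus ?x ?y) with (x - y) in HI.
  rewrite sin_INR_mult_2PI, Rmult_0_r, sin_0, Rminus_diag in HI; apply HI; intros x _.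
  - auto_derive; [easy|]; match goal with |- ?A = ?B => change (@eq R A B) end; field; lra.
  - apply (ex_derive_continuous (fun t => cos (INR j * t))); auto_derive; easy.
Qed.

(** * Power series with coefficients bounded by one *)

(* [psum f N] has N terms, whereas [sum_f_R0 f N] has N + 1. *)
Fixpoint psum (f : nat -> R) (N : nat) : R :=
  match N with O => 0 | S n => psum f n + f n end.

Lemma psum_S f n : psum f (S n) = sum_f_R0 f n.
Proof. induction n as [|n IH]; simpl in *; [ring | now rewrite <- IH]. Qed.

Lemma PSeries_lin2 (p q : nat -> R) (al be r : R) :
  ex_pseries p r -> ex_pseries q r ->
  PSeries (fun n => al * p n + be * q n) r = al * PSeries p r + be * PSeries q r.
Proof.
  intros Hp Hq.
  rewrite (PSeries_ext _ (PS_plus (PS_scal al p) (PS_scal be q))) by reflexivity.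
  rewrite PSeries_plus, !PSeries_scal; [reflexivity | ..];
    now apply ex_pseries_scal; [intros; apply Rmult_comm|].
Qed.

Lemma PSeries_add_shift2 (p q : nat -> R) (al be r : R) :
  ex_pseries p r -> ex_pseries q r ->
  PSeries (fun n => p n + al * PS_incr_n p 2 n + be * PS_incr_n q 2 n) r
  = PSeries p r + r ^ 2 * (al * PSeries p r + be * PSeries q r).
Proof.
  intros Hp Hq.
  rewrite (PSeries_ext _ (PS_plus (PS_plus p (PS_scal al (PS_incr_n p 2)))
                                  (PS_scal be (PS_incr_n q 2)))) by reflexivity.
  rewrite !PSeries_plus, !PSeries_scal, !PSeries_incr_n.
  all: repeat first [ assumption | apply ex_pseries_plus | apply ex_pseries_scal
                    | apply ex_pseries_incr_n | (intros; apply Rmult_comm) ].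
  change (plus ?x ?y) with (x + y); change (scal ?x ?y) with (x * y); ring.
Qed.

Section BoundedCoefficients.
Variable b : nat -> R.
Hypothesis b_le1 : forall n, Rabs (b n) <= 1.

Lemma lt_CV_radius r : Rabs r < 1 -> Rbar_lt (Rabs r) (CV_radius b).
Proof.
  intros Hr.
  assert (H1 : Rbar_le 1 (CV_radius b)).
  { apply (CV_radius_bounded b); exists 1; intros n; rewrite pow1, Rmult_1_r; apply b_le1. }
  destruct (CV_radius b) as [x| |]; simpl in *; lra.
Qed.

Lemma ex_pseries_le1 r : Rabs r < 1 -> ex_pseries b r.
Proof. intros Hr; now apply CV_radius_inside, lt_CV_radius. Qed.

Lemma ex_pseries_derive_le1 r : Rabs r < 1 -> ex_pseries (PS_derive b) r.
Proof. intros Hr; apply CV_radius_inside; rewrite CV_radius_derive; now apply lt_CV_radius. Qed.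

Lemma is_derive_PSeries_le1 r :
  Rabs r < 1 -> is_derive (PSeries b) r (PSeries (PS_derive b) r).
Proof. intros Hr; now apply is_derive_PSeries, lt_CV_radius. Qed.

Lemma PSeries_tail_le r N : 0 <= r < 1 ->
  Rabs (PSeries b r - psum (fun n => b n * r ^ n) N) <= r ^ N / (1 - r).
Proof.
  intros Hr.
  assert (Hterm : forall n, Rabs (b n * r ^ n) <= r ^ n).
  { intros n; rewrite Rabs_mult, (Rabs_right (r ^ n)) by (apply Rle_ge, pow_le; lra).
    rewrite <- (Rmult_1_l (r ^ n)) at 2; apply Rmult_le_compat_r; [apply pow_le; lra | apply b_le1]. }
  assert (Habs : forall M, ex_series (fun k => Rabs (b (M + k)%nat * r ^ (M + k)))).
  { intros M; apply (@ex_series_le R_AbsRing R_CompleteNormedModule _ (fun k => r ^ M * r ^ k)).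
    - intros k; rewrite <- pow_add; apply Rle_trans with (2 := Hterm _), Req_le, Rabs_Rabsolu.
    - apply (ex_series_scal_l (r ^ M) (fun k => r ^ k)), ex_series_geom; rewrite Rabs_right; lra. }
  replace (PSeries b r - psum (fun n => b n * r ^ n) N)
    with (Series (fun k => b (N + k)%nat * r ^ (N + k))).
  - eapply Rle_trans; [apply Series_Rabs, Habs|].
    eapply Rle_trans; [apply (Series_le _ (fun k => r ^ N * r ^ k))|].
    + intros k; split; [apply Rabs_pos | rewrite <- pow_add; apply Hterm].
    + apply (ex_series_scal_l (r ^ N) (fun k => r ^ k)), ex_series_geom; rewrite Rabs_right; lra.
    + rewrite Series_scal_l, Series_geom by (rewrite Rabs_right; lra); unfold Rdiv; lra.
  - destruct N as [|N]; unfold PSeries; [simpl; ring|].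
    rewrite (Series_incr_n (fun k => b k * r ^ k) (S N)), psum_S; [simpl pred; ring | lia |].
    apply ex_series_Rabs, (Habs 0%nat).
Qed.

Lemma abs_PSeries_le1 r : 0 <= r < 1 -> Rabs (PSeries b r) <= / (1 - r).
Proof.
  intros Hr; generalize (PSeries_tail_le r 0 Hr); simpl.
  rewrite Rminus_0_r; unfold Rdiv; lra.
Qed.
End BoundedCoefficients.

(** * An Abelian theorem for nonnegative series *)

Section AbelNonneg.
Variables (b : nat -> R) (F : R -> R) (l : R).
Hypothesis b_nonneg : forall n, 0 <= b n.
Hypothesis F_series : forall r, 0 <= r < 1 -> is_series (fun n => b n * r ^ n) (F r).
Hypothesis F_tendsto : forall eps, 0 < eps ->
  exists rho, 0 <= rho < 1 /\ forall r, rho <= r < 1 -> Rabs (F r - l) <= eps.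

Lemma sum_pow_le_F r N : 0 <= r < 1 -> sum_f_R0 (fun n => b n * r ^ n) N <= F r.
Proof.
  intros Hr; apply sum_incr; [apply is_series_Reals, F_series, Hr|].
  intros n; apply Rmult_le_pos; [apply b_nonneg | apply pow_le; lra].
Qed.

Lemma sum_le_abel_limit N : sum_f_R0 b N <= l.
Proof.
  apply Rle_plus_epsilon; intros eps Heps.
  destruct (F_tendsto (eps / 2) ltac:(lra)) as [rho [Hrho HF]].
  set (s := sum_f_R0 b N); assert (Hs : 0 <= s) by (apply cond_pos_sum, b_nonneg).
  assert (HN := pos_INR N).
  set (r := Rmax rho (1 - eps / (2 * (INR N * s + 1)))).
  assert (Hk : 0 < eps / (2 * (INR N * s + 1))) by (apply Rdiv_lt_0_compat; nra).
  assert (Hr : rho <= r < 1) by (split; [apply Rmax_l | apply Rmax_lub_lt; lra]).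
  assert (H1r : (1 - r) * (INR N * s + 1) <= eps / 2).
  { assert (H := Rmax_r rho (1 - eps / (2 * (INR N * s + 1)))); fold r in H.
    apply Rle_div_r; [nra|].
    replace (eps / 2 / (INR N * s + 1)) with (eps / (2 * (INR N * s + 1))) by (field; nra).
    lra. }
  (* r^N s <= F r <= l + eps/2, and r^N >= 1 - N (1 - r) is close to 1. *)
  assert (Hpow : s * r ^ N <= sum_f_R0 (fun n => b n * r ^ n) N).
  { unfold s; rewrite (Rmult_comm _ (r ^ N)), scal_sum; apply sum_Rle; intros n Hn.
    apply Rmult_le_compat_l; [apply b_nonneg | apply pow_le_pow_le1; [lra | exact Hn]]. }
  assert (HFr := sum_pow_le_F r N ltac:(lra)).
  assert (Hl := HF r Hr); apply Rabs_le_between in Hl.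
  assert (HB := pow_ge_1_sub r N ltac:(lra)).
  assert (s * (1 - INR N * (1 - r)) <= s * r ^ N) by (apply Rmult_le_compat_l; lra).
  nra.
Qed.

Lemma is_series_abel_nonneg : is_series b l.
Proof.
  apply is_series_Reals; intros eps Heps.
  destruct (F_tendsto (eps / 2) ltac:(lra)) as [rho [Hrho HF]].
  assert (Hl := HF rho ltac:(lra)); apply Rabs_le_between in Hl.
  destruct (proj1 (is_series_Reals _ _) (F_series rho Hrho) (eps / 2) ltac:(lra)) as [N HN].
  exists N; intros n Hn; specialize (HN n Hn); unfold R_dist in *.
  apply Rabs_def2 in HN.
  assert (Hcomp : sum_f_R0 (fun k => b k * rho ^ k) n <= sum_f_R0 b n).
  { apply sum_Rle; intros k _; rewrite <- (Rmult_1_r (b k)) at 2.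
    apply Rmult_le_compat_l; [apply b_nonneg | apply pow_le1; lra]. }
  assert (Hup := sum_le_abel_limit n).
  apply Rabs_def1; lra.
Qed.
End AbelNonneg.

Lemma a0 : a 0 = 1. Proof. reflexivity. Qed.
Lemma a1 : a 1 = 1. Proof. reflexivity. Qed.

Lemma aSS n : a (S (S n)) = (a (S n) - INR n * a n) / INR (n + 2).
Proof. unfold a; simpl; destruct (ab n); reflexivity. Qed.

Lemma a2 : a 2 = / 2.
Proof. rewrite aSS, a1, a0; simpl; field. Qed.

Lemma a_rec n : INR (S (S (S n))) * a (S (S (S n))) = a (S (S n)) - INR (S n) * a (S n).
Proof.
  rewrite (aSS (S n)); replace (S n + 2)%nat with (S (S (S n))) by lia.
  field; apply not_0_INR; lia.
Qed.

Lemma abs_a_le1 n : Rabs (a n) <= 1.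
Proof.
  enough (H : Rabs (a n) <= 1 /\ Rabs (a (S n)) <= 1) by apply H.
  induction n as [|n [IH0 IH1]]; [rewrite a0, a1, Rabs_R1; lra|].
  split; [exact IH1|].
  assert (Hn := pos_INR n).
  assert (Hnum : Rabs (a (S n) - INR n * a n) <= INR n + 2).
  { unfold Rminus; eapply Rle_trans; [apply Rabs_triang|].
    rewrite Rabs_Ropp, Rabs_mult, (Rabs_right (INR n)); nra. }
  rewrite aSS, plus_INR; simpl (INR 2); rewrite Rabs_div, (Rabs_right (INR n + (1 + 1))) by lra.
  apply Rle_div_l; lra.
Qed.

(** * The modulus of [exp (atan z)] on circles *)

Definition re_coef (t : R) (n : nat) := a n * cos (INR n * t).
Definition im_coef (t : R) (n : nat) := a n * sin (INR n * t).

Lemma abs_re_coef_le1 t n : Rabs (re_coef t n) <= 1.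
Proof.
  unfold re_coef; rewrite Rabs_mult, <- (Rmult_1_l 1).
  apply Rmult_le_compat; try apply Rabs_pos; [apply abs_a_le1 | apply Rabs_le, COS_bound].
Qed.

Lemma abs_im_coef_le1 t n : Rabs (im_coef t n) <= 1.
Proof.
  unfold im_coef; rewrite Rabs_mult, <- (Rmult_1_l 1).
  apply Rmult_le_compat; try apply Rabs_pos; [apply abs_a_le1 | apply Rabs_le, SIN_bound].
Qed.

(* The coefficients of f = exp (atan z) obey (1 + z^2) f' = f; at z = r e^(i t) the real and
   imaginary parts of this identity, as power series in r, read as follows. *)
Lemma re_im_coef_ode t n :
  PS_derive (re_coef t) n + cos (2 * t) * PS_incr_n (PS_derive (re_coef t)) 2 n
    + (- sin (2 * t)) * PS_incr_n (PS_derive (im_coef t)) 2 n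
  = cos t * re_coef t n - sin t * im_coef t n
  /\
  PS_derive (im_coef t) n + cos (2 * t) * PS_incr_n (PS_derive (im_coef t)) 2 n
    + sin (2 * t) * PS_incr_n (PS_derive (re_coef t)) 2 n
  = sin t * re_coef t n + cos t * im_coef t n.
Proof.
  rewrite cos_2a, sin_2a.
  destruct n as [|[|m]]; cbn [PS_incr_n PS_incr_1]; change (@zero _) with 0;
    unfold PS_derive, re_coef, im_coef.
  - rewrite a0, a1; simpl INR; rewrite !Rmult_0_l, !Rmult_1_l, cos_0, sin_0; split; ring.
  - rewrite a1, a2; simpl INR; replace ((1 + 1) * t) with (t + t) by ring.
    rewrite !Rmult_1_l, cos_plus, sin_plus; split; field.
  - rewrite <- !Rmult_assoc, a_rec, !S_INR, !Rmult_plus_distr_r, !Rmult_1_l.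
    repeat (rewrite cos_plus || rewrite sin_plus); split; ring.
Qed.

Definition re_part t r := PSeries (re_coef t) r.
Definition im_part t r := PSeries (im_coef t) r.

Lemma re_im_part_ode t r : Rabs r < 1 ->
  let dU := PSeries (PS_derive (re_coef t)) r in
  let dV := PSeries (PS_derive (im_coef t)) r in
  dU + r ^ 2 * (cos (2 * t) * dU + (- sin (2 * t)) * dV)
    = cos t * re_part t r - sin t * im_part t r
  /\ dV + r ^ 2 * (cos (2 * t) * dV + sin (2 * t) * dU)
    = sin t * re_part t r + cos t * im_part t r.
Proof.
  intros Hr dU dV; unfold dU, dV, re_part, im_part.
  assert (HU := ex_pseries_le1 _ (abs_re_coef_le1 t) r Hr).
  assert (HV := ex_pseries_le1 _ (abs_im_coef_le1 t) r Hr).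
  assert (HdU := ex_pseries_derive_le1 _ (abs_re_coef_le1 t) r Hr).
  assert (HdV := ex_pseries_derive_le1 _ (abs_im_coef_le1 t) r Hr).
  replace (_ - sin t * _) with (cos t * PSeries (re_coef t) r + (- sin t) * PSeries (im_coef t) r)
    by ring.
  rewrite <- !PSeries_add_shift2, <- !PSeries_lin2 by assumption.
  split; apply PSeries_ext; intros n.
  - rewrite (proj1 (re_im_coef_ode t n)); ring.
  - rewrite (proj2 (re_im_coef_ode t n)); ring.
Qed.

Lemma modulus_ode_identity c s r U V dU dV : s ^ 2 + c ^ 2 = 1 ->
  dU + r ^ 2 * ((c * c - s * s) * dU + - (2 * s * c) * dV) = c * U - s * V ->
  dV + r ^ 2 * ((c * c - s * s) * dV + 2 * s * c * dU) = s * U + c * V ->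
  ((1 - r ^ 2) ^ 2 + 4 * r ^ 2 * c ^ 2) * (U * dU + V * dV) = c * (1 + r ^ 2) * (U ^ 2 + V ^ 2).
Proof.
  intros Hsc HU HV.
  set (A := 1 + r ^ 2 * (c * c - s * s)); set (B := 2 * r ^ 2 * s * c).
  apply Rminus_diag_uniq.
  (* the combination (A U - B V) (HU) + (A V + B U) (HV), up to multiples of s^2 + c^2 - 1 *)
  transitivity ((A * U - B * V)
                  * (dU + r ^ 2 * ((c * c - s * s) * dU + - (2 * s * c) * dV) - (c * U - s * V))
    + (A * V + B * U) * (dV + r ^ 2 * ((c * c - s * s) * dV + 2 * s * c * dU) - (s * U + c * V))
    - (s ^ 2 + c ^ 2 - 1) * ((r ^ 4 * (c ^ 2 + s ^ 2 + 1) - 2 * r ^ 2) * (U * dU + V * dV)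
                             - r ^ 2 * c * (U ^ 2 + V ^ 2))).
  - unfold A, B; ring.
  - rewrite HU, HV, Hsc; ring.
Qed.

Definition wr r := 2 * r / (1 - r ^ 2).

Definition modulus_sq r t := exp (atan (wr r * cos t)).

Lemma is_derive_exp_neg_atan c r : Rabs r < 1 ->
  is_derive (fun r => exp (- atan (wr r * c))) r
    (- (2 * c * (1 + r ^ 2) / ((1 - r ^ 2) ^ 2 + 4 * r ^ 2 * c ^ 2)) * exp (- atan (wr r * c))).
Proof.
  intros Hr; assert (H1 := one_sub_sq_pos r Hr); unfold wr.
  auto_derive; [lra|].
  match goal with |- ?A = ?B => change (@eq R A B) end.
  replace (2 * r * / (1 + - (r * (r * 1))) * c) with (2 * r / (1 - r ^ 2) * c) by (field; lra).
  field; split; nra.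
Qed.

Lemma is_derive_modulus_sq t r : Rabs r < 1 ->
  is_derive (fun r => re_part t r ^ 2 + im_part t r ^ 2) r
    (2 * (re_part t r * PSeries (PS_derive (re_coef t)) r
          + im_part t r * PSeries (PS_derive (im_coef t)) r)).
Proof.
  intros Hr.
  assert (HU := is_derive_PSeries_le1 _ (abs_re_coef_le1 t) r Hr).
  assert (HV := is_derive_PSeries_le1 _ (abs_im_coef_le1 t) r Hr).
  replace (2 * _) with (INR 2 * PSeries (PS_derive (re_coef t)) r * re_part t r ^ Nat.pred 2
                        + INR 2 * PSeries (PS_derive (im_coef t)) r * im_part t r ^ Nat.pred 2)
    by (simpl; ring).
  exact (is_derive_plus _ _ _ _ _ (is_derive_pow _ 2 _ _ HU) (is_derive_pow _ 2 _ _ HV)).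
Qed.

Lemma is_derive_damped_modulus_sq t r : Rabs r < 1 ->
  is_derive (fun r => (re_part t r ^ 2 + im_part t r ^ 2) * exp (- atan (wr r * cos t))) r 0.
Proof.
  intros Hr.
  assert (Hode := re_im_part_ode t r Hr); simpl in Hode; rewrite cos_2a, sin_2a in Hode.
  destruct Hode as [HU HV].
  assert (Hsc : sin t ^ 2 + cos t ^ 2 = 1) by (rewrite <- !Rsqr_pow2; apply sin2_cos2).
  assert (Hid := modulus_ode_identity _ _ _ _ _ _ _ Hsc HU HV).
  assert (HD : 0 < (1 - r ^ 2) ^ 2 + 4 * r ^ 2 * cos t ^ 2)
    by (generalize (one_sub_sq_pos r Hr); nra).
  replace 0 with (2 * (re_part t r * PSeries (PS_derive (re_coef t)) r
                       + im_part t r * PSeries (PS_derive (im_coef t)) r)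
                  * exp (- atan (wr r * cos t))
                  + (re_part t r ^ 2 + im_part t r ^ 2)
                    * (- (2 * cos t * (1 + r ^ 2) / ((1 - r ^ 2) ^ 2 + 4 * r ^ 2 * cos t ^ 2))
                       * exp (- atan (wr r * cos t)))).
  - exact (is_derive_mult _ _ _ _ _ (is_derive_modulus_sq t r Hr)
                          (is_derive_exp_neg_atan (cos t) r Hr) Rmult_comm).
  - replace (re_part t r * _ + _) with
      (cos t * (1 + r ^ 2) * (re_part t r ^ 2 + im_part t r ^ 2)
       / ((1 - r ^ 2) ^ 2 + 4 * r ^ 2 * cos t ^ 2)) by (rewrite <- Hid; field; lra).
    field; lra.
Qed.

Lemma modulus_sq_closed_form t r : 0 <= r < 1 ->
  re_part t r ^ 2 + im_part t r ^ 2 = modulus_sq r t.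
Proof.
  intros Hr; unfold modulus_sq.
  set (K x := (re_part t x ^ 2 + im_part t x ^ 2) * exp (- atan (wr x * cos t))).
  assert (HK0 : K 0 = 1).
  { unfold K, re_part, im_part, wr, re_coef, im_coef; rewrite !PSeries_0, a0; simpl.
    replace (2 * 0 / (1 - 0 * (0 * 1)) * cos t) with 0 by field.
    rewrite Rmult_0_l, cos_0, sin_0, atan_0, Ropp_0, exp_0; ring. }
  assert (HKr : K r = 1).
  { destruct (Req_dec r 0) as [->|Hr0]; [exact HK0|].
    rewrite <- HK0; symmetry; apply eq_is_derive; [|lra].
    intros x Hx; apply is_derive_damped_modulus_sq; rewrite Rabs_right; lra. }
  unfold K in HKr; rewrite exp_Ropp in HKr.
  assert (Hpos := exp_pos (atan (wr r * cos t))).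
  apply (Rmult_eq_reg_r (/ exp (atan (wr r * cos t)))); [rewrite HKr; field; lra|].
  apply Rinv_neq_0_compat; lra.
Qed.

(** * Parseval's identity *)

Definition re_psum r t N := psum (fun n => re_coef t n * r ^ n) N.
Definition im_psum r t N := psum (fun n => im_coef t n * r ^ n) N.

Lemma is_RInt_psum_orth r N K : (N <= K)%nat ->
  is_RInt (fun t => re_psum r t N * cos (INR K * t) + im_psum r t N * sin (INR K * t))
          0 (2 * PI) 0.
Proof.
  induction N as [|N IH]; intros HK.
  - enough (H : is_RInt (fun _ => 0) 0 (2 * PI) ((2 * PI - 0) * 0)).
    + rewrite Rmult_0_r in H; eapply is_RInt_ext; [|exact H]; intros x _.
      unfold re_psum, im_psum; simpl; ring.
    + exact (is_RInt_const 0 (2 * PI) 0).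
  - enough (H : is_RInt (fun t => re_psum r t N * cos (INR K * t) + im_psum r t N * sin (INR K * t)
                                  + a N * r ^ N * cos (INR (K - N) * t)) 0 (2 * PI) (0 + a N * r ^ N * 0)).
    + rewrite Rmult_0_r, Rplus_0_r in H; eapply is_RInt_ext; [|exact H]; intros x _.
      unfold re_psum, im_psum, re_coef, im_coef; simpl.
      rewrite minus_INR, Rmult_minus_distr_r, cos_minus by lia; ring.
    + apply (is_RInt_plus (V := R_NormedModule)); [apply IH; lia|].
      apply (is_RInt_scal (V := R_NormedModule)), is_RInt_cos_INR_mult; lia.
Qed.

Lemma parseval_psum r N :
  is_RInt (fun t => re_psum r t N ^ 2 + im_psum r t N ^ 2) 0 (2 * PI)
          (2 * PI * psum (fun n => (a n * r ^ n) ^ 2) N).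
Proof.
  induction N as [|N IH].
  - enough (H : is_RInt (fun _ => 0) 0 (2 * PI) ((2 * PI - 0) * 0)).
    + replace ((2 * PI - 0) * 0) with (2 * PI * psum (fun n => (a n * r ^ n) ^ 2) 0) in H
        by (simpl; ring).
      eapply is_RInt_ext; [|exact H]; intros x _; unfold re_psum, im_psum; simpl; ring.
    + exact (is_RInt_const 0 (2 * PI) 0).
  - set (c := a N * r ^ N).
    enough (H : is_RInt (fun t => re_psum r t N ^ 2 + im_psum r t N ^ 2
                  + 2 * c * (re_psum r t N * cos (INR N * t) + im_psum r t N * sin (INR N * t))
                  + c ^ 2) 0 (2 * PI)
                  (2 * PI * psum (fun n => (a n * r ^ n) ^ 2) N + 2 * c * 0 + (2 * PI - 0) * c ^ 2)).
    + replace (_ + 2 * c * 0 + _) with (2 * PI * psum (fun n => (a n * r ^ n) ^ 2) (S N)) in H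
        by (unfold c; simpl; ring).
      eapply is_RInt_ext; [|exact H]; intros x _.
      assert (Hsc := sin2_cos2 (INR N * x)); unfold Rsqr in Hsc.
      unfold re_psum, im_psum, re_coef, im_coef, c; simpl; nra.
    + apply (is_RInt_plus (V := R_NormedModule)); [apply (is_RInt_plus (V := R_NormedModule))|].
      * exact IH.
      * apply (is_RInt_scal (V := R_NormedModule)), is_RInt_psum_orth; lia.
      * exact (is_RInt_const 0 (2 * PI) (c ^ 2)).
Qed.

Lemma modulus_sq_psum_err r t N : 0 <= r < 1 ->
  Rabs (modulus_sq r t - (re_psum r t N ^ 2 + im_psum r t N ^ 2)) <= 6 * (r ^ N / (1 - r)) / (1 - r).
Proof.
  intros Hr; rewrite <- modulus_sq_closed_form by exact Hr.
  assert (Hinv : 0 < / (1 - r)) by (apply Rinv_0_lt_compat; lra).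
  assert (HeM : r ^ N / (1 - r) <= / (1 - r)).
  { unfold Rdiv; rewrite <- (Rmult_1_l (/ (1 - r))) at 2.
    apply Rmult_le_compat_r; [lra | apply pow_le1; lra]. }
  assert (HU := abs_sq_sub_le _ _ _ _ (PSeries_tail_le _ (abs_re_coef_le1 t) r N Hr)
                  (abs_PSeries_le1 _ (abs_re_coef_le1 t) r Hr) HeM).
  assert (HV := abs_sq_sub_le _ _ _ _ (PSeries_tail_le _ (abs_im_coef_le1 t) r N Hr)
                  (abs_PSeries_le1 _ (abs_im_coef_le1 t) r Hr) HeM).
  replace (_ - _) with ((re_part t r ^ 2 - re_psum r t N ^ 2) + (im_part t r ^ 2 - im_psum r t N ^ 2))
    by ring.
  eapply Rle_trans; [apply Rabs_triang|]; unfold re_part, im_part, re_psum, im_psum, Rdiv in *; lra.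
Qed.

Definition J r := RInt (modulus_sq r) 0 (2 * PI).

Lemma ex_RInt_modulus_sq r u v : 0 <= r < 1 -> ex_RInt (modulus_sq r) u v.
Proof.
  intros Hr; apply (@ex_RInt_continuous R_CompleteNormedModule); intros z _.
  apply (ex_derive_continuous (modulus_sq r)); unfold modulus_sq, wr; auto_derive; nra.
Qed.

Lemma J_psum_err r N : 0 <= r < 1 ->
  Rabs (J r - 2 * PI * psum (fun n => (a n * r ^ n) ^ 2) N)
  <= 2 * PI * (6 * (r ^ N / (1 - r)) / (1 - r)).
Proof.
  intros Hr; assert (HP := PI_RGT_0).
  assert (Hdiff := is_RInt_minus _ _ _ _ _ _ (RInt_correct _ _ _ (ex_RInt_modulus_sq r 0 (2 * PI) Hr))
                     (parseval_psum r N)).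
  assert (H := norm_RInt_le_const
                 (fun t => minus (modulus_sq r t) (re_psum r t N ^ 2 + im_psum r t N ^ 2)) 0 (2 * PI) _
                 (6 * (r ^ N / (1 - r)) / (1 - r)) ltac:(lra)
                 (fun t _ => modulus_sq_psum_err r t N Hr) Hdiff).
  rewrite Rminus_0_r in H; exact H.
Qed.

Lemma is_series_sq_coef r : 0 <= r < 1 ->
  is_series (fun n => (a n * r ^ n) ^ 2) (J r / (2 * PI)).
Proof.
  intros Hr; assert (HP := PI_RGT_0); apply is_series_Reals; intros eps Heps.
  assert (Hy : 0 < eps * (1 - r) ^ 2 / 6)
    by (apply Rdiv_lt_0_compat; [apply Rmult_lt_0_compat, pow_lt|]; lra).
  destruct (pow_lt_1_zero r ltac:(rewrite Rabs_right; lra) _ Hy) as [N HN].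
  exists N; intros n Hn; unfold R_dist; rewrite <- psum_S.
  assert (Herr := J_psum_err r (S n) Hr).
  specialize (HN (S n) ltac:(lia)); rewrite Rabs_right in HN by (apply Rle_ge, pow_le; lra).
  replace (_ - _) with (- (J r - 2 * PI * psum (fun n => (a n * r ^ n) ^ 2) (S n)) / (2 * PI))
    by (field; lra).
  rewrite Rabs_div, Rabs_Ropp, (Rabs_right (2 * PI)) by lra.
  apply Rlt_div_l; [lra|].
  eapply Rle_lt_trans; [exact Herr|].
  rewrite (Rmult_comm eps); apply Rmult_lt_compat_l; [lra|].
  apply (Rmult_lt_reg_r ((1 - r) ^ 2)); [apply pow_lt; lra|].
  replace (6 * (r ^ S n / (1 - r)) / (1 - r) * (1 - r) ^ 2) with (6 * r ^ S n) by (field; lra).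
  unfold Rdiv in HN; lra.
Qed.

(** * The limit [r -> 1] *)

Lemma wr_nonneg r : 0 <= r < 1 -> 0 <= wr r.
Proof. intros Hr; unfold wr; apply Rdiv_le_0_compat; nra. Qed.

Lemma modulus_sq_bounds r t : exp (- (PI / 2)) <= modulus_sq r t <= exp (PI / 2).
Proof. unfold modulus_sq; destruct (atan_bound (wr r * cos t)); split; apply exp_le_mono; lra. Qed.

Lemma J_split r u v : 0 <= r < 1 ->
  J r = RInt (modulus_sq r) 0 u + RInt (modulus_sq r) u v + RInt (modulus_sq r) v (2 * PI).
Proof.
  intros Hr; unfold J.
  rewrite <- (RInt_Chasles (modulus_sq r) 0 v (2 * PI)), <- (RInt_Chasles (modulus_sq r) 0 u v);
    auto using ex_RInt_modulus_sq.
Qed.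

(* Split [0, 2 PI] where |cos t| = sin eta: there the integrand is monotone in cos t, and elsewhere
   it lies between exp (- PI / 2) and exp (PI / 2). *)
Lemma J_ge r eta : 0 <= r < 1 -> 0 < eta < PI / 2 ->
  (PI - 2 * eta) * exp (atan (wr r * sin eta)) + (PI + 2 * eta) * exp (- (PI / 2)) <= J r.
Proof.
  intros Hr Heta; assert (HP := PI_RGT_0); assert (Hw := wr_nonneg r Hr).
  set (th := PI / 2 - eta); rewrite (J_split r th (2 * PI - th) Hr).
  assert (Hmid := modulus_sq_bounds r).
  assert (Hcos : forall x, (0 <= x <= th \/ 2 * PI - th <= x <= 2 * PI) ->
                           exp (atan (wr r * sin eta)) <= modulus_sq r x).
  { intros x Hx; unfold modulus_sq; apply exp_le_mono, atan_le_mono, Rmult_le_compat_l; [exact Hw|].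
    rewrite <- cos_shift; fold th; destruct Hx.
    - apply cos_decr_1; unfold th in *; lra.
    - replace (cos x) with (cos (2 * PI - x)) by (rewrite cos_minus, cos_2PI, sin_2PI; ring).
      apply cos_decr_1; unfold th in *; lra. }
  assert (A := RInt_ge_const (modulus_sq r) 0 th _ ltac:(unfold th; lra) (ex_RInt_modulus_sq r _ _ Hr)
                 (fun x Hx => Hcos x ltac:(lra))).
  assert (B := RInt_ge_const (modulus_sq r) th (2 * PI - th) _ ltac:(unfold th; lra) (ex_RInt_modulus_sq r _ _ Hr)
                 (fun x _ => proj1 (Hmid x))).
  assert (C := RInt_ge_const (modulus_sq r) (2 * PI - th) (2 * PI) _ ltac:(unfold th; lra)
                 (ex_RInt_modulus_sq r _ _ Hr) (fun x Hx => Hcos x ltac:(lra))).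
  unfold th in *; lra.
Qed.

Lemma J_le r eta : 0 <= r < 1 -> 0 < eta < PI / 2 ->
  J r <= (PI - 2 * eta) * exp (- atan (wr r * sin eta)) + (PI + 2 * eta) * exp (PI / 2).
Proof.
  intros Hr Heta; assert (HP := PI_RGT_0); assert (Hw := wr_nonneg r Hr).
  set (th := PI / 2 - eta); rewrite (J_split r (PI - th) (PI + th) Hr).
  assert (Hside := modulus_sq_bounds r).
  assert (Hcos : forall x, PI - th < x < PI + th -> modulus_sq r x <= exp (- atan (wr r * sin eta))).
  { intros x Hx; unfold modulus_sq; apply exp_le_mono; rewrite <- atan_opp; apply atan_le_mono.
    replace (cos x) with (- cos (x - PI)) by (rewrite cos_minus, cos_PI, sin_PI; ring).
    enough (sin eta <= cos (x - PI)) by nra.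
    rewrite <- cos_shift; fold th; destruct (Rle_dec PI x).
    - apply cos_decr_1; unfold th in *; lra.
    - rewrite <- (cos_neg (x - PI)); apply cos_decr_1; unfold th in *; lra. }
  assert (A := RInt_le_const (modulus_sq r) 0 (PI - th) _ ltac:(unfold th; lra) (ex_RInt_modulus_sq r _ _ Hr)
                 (fun x _ => proj2 (Hside x))).
  assert (B := RInt_le_const (modulus_sq r) (PI - th) (PI + th) _ ltac:(unfold th; lra)
                 (ex_RInt_modulus_sq r _ _ Hr) Hcos).
  assert (C := RInt_le_const (modulus_sq r) (PI + th) (2 * PI) _ ltac:(unfold th; lra)
                 (ex_RInt_modulus_sq r _ _ Hr) (fun x _ => proj2 (Hside x))).
  unfold th in *; lra.
Qed.

Lemma atan_wr_sin_large eta : 0 < eta < PI / 2 ->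
  exists rho, 0 <= rho < 1 /\ forall r, rho <= r < 1 -> PI / 2 - eta <= atan (wr r * sin eta).
Proof.
  intros Heta.
  assert (Hs : 0 < sin eta) by (apply sin_gt_0; lra).
  assert (Hc : 0 < cos eta) by (apply cos_gt_0; lra).
  assert (Hc1 := COS_bound eta).
  set (X := / sin eta ^ 2); assert (HX : 0 < X) by (apply Rinv_0_lt_compat, pow_lt, Hs).
  exists (X / (1 + X)); split.
  { split; [apply Rdiv_le_0_compat|apply Rlt_div_l]; lra. }
  intros r [Hr Hr1]; apply Rle_div_l in Hr; [|lra].
  assert (Hw : X <= wr r) by (apply Rle_div_r; nra).
  replace (PI / 2 - eta) with (atan (/ tan eta))
    by (rewrite atan_inv, atan_tan by (try apply tan_gt_0; lra); ring).
  apply atan_le_mono; unfold tan.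
  replace (/ (sin eta / cos eta)) with (cos eta * (X * sin eta)) by (unfold X; field; split; lra).
  apply Rle_trans with (X * sin eta).
  { rewrite <- (Rmult_1_l (X * sin eta)) at 2.
    apply Rmult_le_compat_r; [apply Rlt_le, Rmult_lt_0_compat|]; lra. }
  apply Rmult_le_compat_r; lra.
Qed.

Lemma exp_near_half_pi x eta : 0 <= eta <= 1 / 2 -> PI / 2 - eta <= x <= PI / 2 ->
  exp (PI / 2) * (1 - eta) <= exp x /\ exp (- x) <= exp (- (PI / 2)) * (1 + 2 * eta).
Proof.
  intros Heta Hx; split.
  - apply Rle_trans with (exp (PI / 2 + - eta)); [|apply exp_le_mono; lra].
    rewrite exp_plus; apply Rmult_le_compat_l; [apply Rlt_le, exp_pos|].
    generalize (exp_ineq1_le (- eta)); lra.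
  - apply Rle_trans with (exp (- (PI / 2) + eta)); [apply exp_le_mono; lra|].
    rewrite exp_plus; apply Rmult_le_compat_l; [apply Rlt_le, exp_pos | apply exp_le_1_add_2x; lra].
Qed.

Definition cosh_half_pi := (exp (PI / 2) + exp (- (PI / 2))) / 2.

Lemma J_tendsto eps : 0 < eps ->
  exists rho, 0 <= rho < 1 /\
    forall r, rho <= r < 1 -> Rabs (J r - 2 * PI * cosh_half_pi) <= eps.
Proof.
  intros Heps; assert (HP := PI2_3_2); assert (HP4 := PI_4).
  set (E := exp (PI / 2)); set (E' := exp (- (PI / 2))).
  assert (HE : 1 <= E) by (rewrite <- exp_0; apply exp_le_mono; lra).
  assert (HE' : 0 < E' <= 1) by (split; [apply exp_pos | rewrite <- exp_0; apply exp_le_mono; lra]).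
  set (eta := Rmin (1 / 2) (eps / (10 * E))).
  assert (Heta : 0 < eta <= 1 / 2)
    by (split; [apply Rmin_glb_lt; [|apply Rdiv_lt_0_compat] | apply Rmin_l]; lra).
  assert (Heta_eps : 10 * E * eta <= eps).
  { assert (H := Rmin_r (1 / 2) (eps / (10 * E))); fold eta in H.
    apply Rle_div_r in H; lra. }
  destruct (atan_wr_sin_large eta ltac:(lra)) as [rho [Hrho Hat]].
  exists rho; split; [exact Hrho|]; intros r Hr.
  assert (Hr0 : 0 <= r < 1) by lra.
  specialize (Hat r Hr); set (x := atan (wr r * sin eta)) in *.
  assert (Hx := atan_bound (wr r * sin eta)); fold x in Hx.
  destruct (exp_near_half_pi x eta ltac:(lra) ltac:(lra)) as [Hlow Hup]; fold E E' in Hlow, Hup.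
  assert (Hge := J_ge r eta Hr0 ltac:(lra)); assert (Hle := J_le r eta Hr0 ltac:(lra)).
  fold x E E' in Hge, Hle; unfold cosh_half_pi; fold E E'.
  assert (Hge' : (PI - 2 * eta) * (E * (1 - eta)) <= (PI - 2 * eta) * exp x)
    by (apply Rmult_le_compat_l; lra).
  assert (Hle' : (PI - 2 * eta) * exp (- x) <= (PI - 2 * eta) * (E' * (1 + 2 * eta)))
    by (apply Rmult_le_compat_l; lra).
  assert (0 <= (4 - PI) * (E * eta)) by (apply Rmult_le_pos; nra).
  assert (PI * eta * E' <= PI * eta)
    by (rewrite <- (Rmult_1_r (PI * eta)) at 2; apply Rmult_le_compat_l; nra).
  assert (PI * eta <= 4 * E * eta) by nra.
  apply Rabs_le; split; nra.
Qed.

Lemma is_series_a_sq_pow r : 0 <= r < 1 ->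
  is_series (fun n => a n ^ 2 * r ^ n) (J (sqrt r) / (2 * PI)).
Proof.
  intros Hr.
  assert (Hs : 0 <= sqrt r < 1).
  { split; [apply sqrt_pos | rewrite <- sqrt_1; apply sqrt_lt_1; lra]. }
  eapply is_series_ext; [|exact (is_series_sq_coef _ Hs)]; intros n.
  cbv beta; rewrite Rpow_mult_distr, <- pow_mult, Nat.mul_comm, pow_mult, pow2_sqrt by lra; reflexivity.
Qed.

Lemma J_sqrt_tendsto eps : 0 < eps ->
  exists rho, 0 <= rho < 1 /\
    forall r, rho <= r < 1 -> Rabs (J (sqrt r) / (2 * PI) - cosh_half_pi) <= eps.
Proof.
  intros Heps; assert (HP := PI_RGT_0).
  destruct (J_tendsto (2 * PI * eps) ltac:(nra)) as [rho [Hrho HJ]].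
  exists (rho ^ 2); split; [split; nra|]; intros r Hr.
  assert (Hs : rho <= sqrt r < 1).
  { split; [rewrite <- (sqrt_pow2 rho) by lra; apply sqrt_le_1; nra
           | rewrite <- sqrt_1; apply sqrt_lt_1; nra]. }
  replace (_ - _) with ((J (sqrt r) - 2 * PI * cosh_half_pi) / (2 * PI)) by (field; lra).
  rewrite Rabs_div, (Rabs_right (2 * PI)) by lra.
  apply Rle_div_l; [lra|]; rewrite (Rmult_comm eps); exact (HJ _ Hs).
Qed.

Theorem mainTheorem6 :
  is_series (fun n : nat => (a (S n)) ^ 2)
            ((exp (PI / 2) + exp (- (PI / 2))) / 2 - 1).
Proof.
  apply (is_series_incr_1 (fun n => a n ^ 2)).
  replace (plus _ _) with cosh_half_pi by (rewrite a0; change plus with Rplus; unfold cosh_half_pi; ring).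
  apply (is_series_abel_nonneg _ (fun r => J (sqrt r) / (2 * PI))).
  - intros n; apply pow2_ge_0.
  - exact is_series_a_sq_pow.
  - exact J_sqrt_tendsto.
Qed.
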